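(* Let $n\ge 3$, let $\{(M_i,g_i)\}_{i\ge1}$ be a sequence in $\mathcal{RotSym}_n$ with graphical representatives $f_i$, all defined on $[a_0,\infty)$ for some $a_0>0$, and suppose $f_i(r)\to f(r)$ for every $r\ge a_0$, for some function $f:[a_0,\infty)\to\mathbb{R}$. If $r_0\in(a_0,\infty)$ and $f$ is differentiable at $r_0$, then $\lim_{i\to\infty}f_i'(r_0)=f'(r_0)$.
   Context: $\mathcal{RotSym}_n$ is the class of smooth Riemannian $n$-manifolds $(M,g)$ with $g=ds^2+h(s)^2g_{S^{n-1}}$, $h:[0,\infty)\to[0,\infty)$ smooth, such that either $h(0)=0,h'(0)=1$ or $h(0)>0,h'(0)=0$; $h'(s)>0$ for $s>0$; $h(s)\to\infty$; and $g$ has nonnegative scalar curvature. A graphical representative is a radial function $f(r)$, $r=|\vec x|\ge h(0)$, continuous and smooth in the interior, whose graph in $\mathbb{R}^{n+1}$ with induced Euclidean metric is isometric to $(M,g)$. For such $f$, the function $r\mapsto r^{n-2}\frac{f'(r)^2}{1+f'(r)^2}$ (twice the Hawking mass of the sphere over $|\vec x|=r$) is nondecreasing and $f'\ge 0$. *)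

From Stdlib Require Import Reals Lra.
From Coquelicot Require Import Coquelicot.
Open Scope R_scope.

Definition smooth (f : R -> R) : Prop :=
  forall (k : nat) (x : R), ex_derive_n f k x.

Definition smooth_on_open (a : R) (f : R -> R) : Prop :=
  forall (k : nat) (x : R), a < x -> ex_derive_n f k x.

Definition continuous_on_closed (a : R) (f : R -> R) : Prop :=
  forall r : R, a <= r ->
    filterlim f (within (fun x => a <= x) (locally r)) (locally (f r)).

(* Scalar curvature of g = ds^2 + h(s)^2 g_{S^{n-1}} at s (s > 0, h(s) > 0). *)
Definition scal_warped (n : nat) (h : R -> R) (s : R) : R :=
  - 2 * (INR n - 1) * Derive_n h 2 s / h s
  + (INR n - 1) * (INR n - 2) * (1 - (Derive h s) ^ 2) / (h s) ^ 2.

(* The class RotSym_n, described by the warping function h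
   (only its values on [0,+oo) matter). *)
Definition RotSym (n : nat) (h : R -> R) : Prop :=
  (* h smooth on [0,oo): realized as restriction of a smooth function on R *)
  smooth h /\
  (forall s, 0 <= s -> 0 <= h s) /\
  (* either a pole (with smoothness of the metric at the pole: h odd to all
     orders at 0) or a minimal boundary sphere *)
  ((h 0 = 0 /\ Derive h 0 = 1 /\ (forall k : nat, Derive_n h (2 * k) 0 = 0))
   \/ (h 0 > 0 /\ Derive h 0 = 0)) /\
  (forall s, 0 < s -> Derive h s > 0) /\
  is_lim h p_infty p_infty /\
  (* nonnegative scalar curvature (on s > 0; at s = 0 it follows by continuity) *)
  (forall s, 0 < s -> 0 <= scal_warped n h s).

(* f is a graphical representative of (M, g) = ([0,oo) x S^{n-1},
   ds^2 + h^2 g_S): the radial graph r |-> f(|x|), r >= h(0), with induced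
   metric (1 + f'(r)^2) dr^2 + r^2 g_S, is isometric to g via r = h(s),
   i.e. (1 + f'(h s)^2) h'(s)^2 = 1 for s > 0; normalized with f' >= 0. *)
Definition graph_rep (h f : R -> R) : Prop :=
  continuous_on_closed (h 0) f /\
  smooth_on_open (h 0) f /\
  (forall s, 0 < s -> (1 + (Derive f (h s)) ^ 2) * (Derive h s) ^ 2 = 1) /\
  (forall r, h 0 < r -> 0 <= Derive f r).

From Stdlib Require Import Reals Lra Lia.
From Coquelicot Require Import Coquelicot.
Open Scope R_scope.

(* Twice the Hawking mass r^(n-2) f'^2 / (1 + f'^2) of a graphical representative
   is nondecreasing in r: in the arclength coordinate r = h(s) it equals
   h^(n-2) (1 - h'^2), whose derivative is h' h^(n-3) times a positive multiple of
   the scalar curvature.  Hence a slope f_i'(r0) above f'(r0) persists, uniformly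
   in i, on a right neighbourhood of r0, and a slope below f'(r0) persists on a
   left neighbourhood; by the mean value theorem either would make the increments
   of f_i near r0 differ from those of f, contradicting pointwise convergence. *)

Definition mass_factor (x : R) : R := x ^ 2 / (1 + x ^ 2).

(* Twice the Hawking mass of the sphere over [|x| = r] in the graph of [g],
   in dimension [k + 2]. *)
Definition hawking_mass (k : nat) (g : R -> R) (r : R) : R :=
  r ^ k * mass_factor (Derive g r).

Lemma mass_factor_lt x y : 0 <= x -> x < y -> mass_factor x < mass_factor y.
Proof.
  intros x_ge0 xy. unfold mass_factor.
  apply (Rmult_lt_reg_r ((1 + x ^ 2) * (1 + y ^ 2))); [nra |].
  replace (x ^ 2 / (1 + x ^ 2) * ((1 + x ^ 2) * (1 + y ^ 2)))
    with (x ^ 2 * (1 + y ^ 2)) by (field; nra).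
  replace (y ^ 2 / (1 + y ^ 2) * ((1 + x ^ 2) * (1 + y ^ 2)))
    with (y ^ 2 * (1 + x ^ 2)) by (field; nra).
  nra.
Qed.

Lemma mass_factor_le x y : 0 <= x -> x <= y -> mass_factor x <= mass_factor y.
Proof.
  intros x_ge0 [xy | <-]; [left; now apply mass_factor_lt | apply Rle_refl].
Qed.

Lemma mass_factor_lt_inv x y : 0 <= y -> mass_factor x < mass_factor y -> x < y.
Proof.
  intros y_ge0 lt_xy. apply Rnot_le_lt. intros le_yx.
  pose proof (mass_factor_le y x y_ge0 le_yx). lra.
Qed.

Lemma mass_factor_unit_length F D :
  (1 + F ^ 2) * D ^ 2 = 1 -> mass_factor F = 1 - D ^ 2.
Proof.
  intros unit. unfold mass_factor.
  apply (Rmult_eq_reg_r (1 + F ^ 2)); [| nra].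
  field_simplify; nra.
Qed.

Lemma MVT_interval (g dg : R -> R) (u v : R) : u <= v ->
  (forall r, u <= r <= v -> is_derive g r (dg r)) ->
  exists c, u <= c <= v /\ g v - g u = dg c * (v - u).
Proof.
  intros uv dg_g.
  destruct (MVT_gen g u v dg) as [c [c_uv increment]];
    rewrite ?Rmin_left, ?Rmax_right in * by lra.
  - intros r r_uv. apply dg_g. lra.
  - intros r r_uv. apply continuity_pt_filterlim.
    apply (ex_derive_continuous g). exists (dg r). apply dg_g. lra.
  - now exists c.
Qed.

Lemma scal_warped_factor (n : nat) (h : R -> R) (s : R) : h s <> 0 ->
  scal_warped n h s = (INR n - 1) / h s ^ 2 *
    ((INR n - 2) * (1 - Derive h s ^ 2) - 2 * h s * Derive_n h 2 s).
Proof. intros hs_neq0. unfold scal_warped. field. exact hs_neq0. Qed.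

Lemma is_derive_warped_mass (h : R -> R) (m : nat) (s : R) :
  is_derive h s (Derive h s) -> is_derive (Derive h) s (Derive_n h 2 s) ->
  is_derive (fun s => h s ^ S m * (1 - Derive h s ^ 2)) s
    (h s ^ m * Derive h s *
       (INR (S m) * (1 - Derive h s ^ 2) - 2 * h s * Derive_n h 2 s)).
Proof.
  intros dh d2h.
  pose proof (is_derive_mult _ _ s _ _ (is_derive_pow h (S m) s _ dh)
    (is_derive_minus _ _ s _ _ (is_derive_const 1 s) (is_derive_pow (Derive h) 2 s _ d2h))
    Rmult_comm) as d.
  match type of d with is_derive _ _ ?v =>
    match goal with |- is_derive _ _ ?t => replace t with v; [exact d |] end end.
  rewrite S_INR. unfold minus. simpl. unfold plus, mult, opp, zero. simpl. ring.
Qed.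

Section Warp.

Variables (n : nat) (h : R -> R).
Hypothesis n_ge3 : (3 <= n)%nat.
Hypothesis h_RotSym : RotSym n h.

Lemma warp_is_derive s : is_derive h s (Derive h s).
Proof. apply Derive_correct. exact (proj1 h_RotSym 1%nat s). Qed.

Lemma warp_is_derive2 s : is_derive (Derive h) s (Derive_n h 2 s).
Proof. apply Derive_correct. exact (proj1 h_RotSym 2%nat s). Qed.

Lemma warp_lt s1 s2 : 0 < s1 -> s1 < s2 -> h s1 < h s2.
Proof.
  intros s1_gt0 s12.
  destruct h_RotSym as (_ & _ & _ & h'_gt0 & _).
  apply (incr_function h (Finite 0) p_infty (Derive h)); simpl; auto.
  intros s s_gt0 _. apply warp_is_derive.
Qed.

Lemma warp_gt0 s : 0 < s -> 0 < h s.
Proof.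
  intros s_gt0. destruct h_RotSym as (_ & h_ge0 & _).
  pose proof (h_ge0 (s / 2) ltac:(lra)).
  pose proof (warp_lt (s / 2) s ltac:(lra) ltac:(lra)). lra.
Qed.

Lemma warp_onto r : h 0 < r -> exists s, 0 < s /\ h s = r.
Proof.
  intros r_gt.
  destruct h_RotSym as (_ & _ & _ & _ & h_lim & _).
  apply is_lim_spec in h_lim. destruct (h_lim r) as [M beyond_M].
  set (S := Rmax 1 (M + 1)).
  assert (S_gt : 1 <= S /\ M + 1 <= S) by (split; [apply Rmax_l | apply Rmax_r]).
  pose proof (beyond_M S ltac:(lra)).
  assert (h_cont : continuity h).
  { intros s. apply continuity_pt_filterlim, (ex_derive_continuous h).
    eexists. apply warp_is_derive. }
  destruct (IVT_gen h 0 S r h_cont) as [s [s_bd hs]];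
    rewrite ?Rmin_left, ?Rmax_right in * by lra.
  { lra. }
  exists s. split; [| exact hs].
  destruct s_bd as [[s_gt0 | <-] _]; [exact s_gt0 | lra].
Qed.

Lemma warp_mass_nondecreasing s1 s2 : 0 < s1 -> s1 <= s2 ->
  h s1 ^ (n - 2) * (1 - Derive h s1 ^ 2) <= h s2 ^ (n - 2) * (1 - Derive h s2 ^ 2).
Proof.
  intros s1_gt0 s12.
  destruct h_RotSym as (_ & _ & _ & h'_gt0 & _ & scal_ge0).
  replace (n - 2)%nat with (S (n - 3)) by lia.
  destruct (MVT_interval _ _ s1 s2 s12
      (fun s _ => is_derive_warped_mass h (n - 3) s (warp_is_derive s) (warp_is_derive2 s)))
    as [c [c_bd increment]].
  assert (hc_gt0 := warp_gt0 c ltac:(lra)).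
  assert (curvature : 0 <= INR (S (n - 3)) * (1 - Derive h c ^ 2)
                           - 2 * h c * Derive_n h 2 c).
  { pose proof (scal_ge0 c ltac:(lra)) as scal_c.
    rewrite scal_warped_factor in scal_c by lra.
    replace (INR (S (n - 3))) with (INR n - 2)
      by (rewrite S_INR, minus_INR by lia; simpl; ring).
    assert (1 < INR n) by (apply (lt_INR 1); lia).
    assert (0 < (INR n - 1) / h c ^ 2) by (apply Rdiv_lt_0_compat; nra).
    nra. }
  assert (0 <= h c ^ (n - 3) * Derive h c) by
    (apply Rmult_le_pos; [apply pow_le; lra | left; apply h'_gt0; lra]).
  assert (0 <= h c ^ (n - 3) * Derive h c *
     (INR (S (n - 3)) * (1 - Derive h c ^ 2) - 2 * h c * Derive_n h 2 c))
    by (apply Rmult_le_pos; assumption).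
  nra.
Qed.

End Warp.

Lemma graph_rep_mass_nondecreasing n h g r1 r2 : (3 <= n)%nat ->
  RotSym n h -> graph_rep h g -> h 0 < r1 -> r1 <= r2 ->
  hawking_mass (n - 2) g r1 <= hawking_mass (n - 2) g r2.
Proof.
  intros n_ge3 h_RotSym (_ & _ & isometry & _) r1_gt r12.
  destruct (warp_onto n h h_RotSym r1 r1_gt) as [s1 [s1_gt0 <-]].
  destruct (warp_onto n h h_RotSym r2 ltac:(lra)) as [s2 [s2_gt0 <-]].
  assert (s12 : s1 <= s2).
  { apply Rnot_lt_le. intros s21. pose proof (warp_lt n h h_RotSym s2 s1 s2_gt0 s21). lra. }
  unfold hawking_mass.
  rewrite !mass_factor_unit_length with (D := Derive h _) by auto.
  now apply warp_mass_nondecreasing.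
Qed.

Lemma is_lim_seq_eventually_lt (u : nat -> R) (l c : R) :
  is_lim_seq u l -> l < c -> eventually (fun i => u i < c).
Proof. intros cvg lc. apply (cvg (fun x => x < c)), open_lt, lc. Qed.

Lemma is_lim_seq_eventually_gt (u : nat -> R) (l c : R) :
  is_lim_seq u l -> c < l -> eventually (fun i => c < u i).
Proof. intros cvg cl. apply (cvg (fun x => c < x)), open_gt, cl. Qed.

Lemma Derive_increment_bounds (F : R -> R) (r0 e : R) : ex_derive F r0 -> 0 < e ->
  exists d : posreal, forall t, 0 < t < d ->
    F (r0 + t) - F r0 < t * (Derive F r0 + e) /\
    t * (Derive F r0 - e) < F r0 - F (r0 - t).
Proof.
  intros F_der e_gt0.
  assert (quotient : derivable_pt_lim F r0 (Derive F r0))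
    by now apply is_derive_Reals, Derive_correct.
  destruct (quotient e e_gt0) as [d near]. exists d. intros t t_bd.
  pose proof (near t ltac:(lra) ltac:(rewrite Rabs_right; lra)) as right.
  pose proof (near (- t) ltac:(lra) ltac:(rewrite Rabs_left; lra)) as left.
  apply Rabs_def2 in right, left.
  replace (r0 + - t) with (r0 - t) in left by ring.
  split.
  - replace (F (r0 + t) - F r0) with ((F (r0 + t) - F r0) / t * t) by (field; lra).
    nra.
  - replace (F r0 - F (r0 - t)) with ((F (r0 - t) - F r0) / - t * t) by (field; lra).
    nra.
Qed.

Lemma locally_pow_mul_lt (k : nat) (r0 p q : R) : 0 < r0 -> p < q ->
  exists d : posreal, forall r, Rabs (r - r0) < d ->
    r ^ k * p < r0 ^ k * q /\ r0 ^ k * p < r ^ k * q.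
Proof.
  intros r0_gt0 pq.
  assert (r0k_gt0 : 0 < r0 ^ k) by now apply pow_lt.
  assert (cont : forall c, continuous (fun r => r ^ k * c) r0).
  { intros c. apply (ex_derive_continuous (fun r => r ^ k * c)). auto_derive. easy. }
  assert (below : locally r0 (fun r => r ^ k * p < r0 ^ k * q))
    by (apply (cont p (fun y => y < r0 ^ k * q)), open_lt; nra).
  assert (above : locally r0 (fun r => r0 ^ k * p < r ^ k * q))
    by (apply (cont q (fun y => r0 ^ k * p < y)), open_gt; nra).
  destruct (filter_and _ _ below above) as [d near].
  exists d. intros r r_near. exact (near r r_near).
Qed.

Section DerivativeLimit.

Variables (k : nat) (g : nat -> R -> R) (F : R -> R) (a r0 : R).
Hypothesis a_gt0 : 0 < a.
Hypothesis a_lt_r0 : a < r0.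
Hypothesis g_derivable : forall i r, a < r -> ex_derive (g i) r.
Hypothesis g_Derive_ge0 : forall i r, a < r -> 0 <= Derive (g i) r.
Hypothesis g_mass_nondecreasing : forall i r1 r2, a < r1 -> r1 <= r2 ->
  hawking_mass k (g i) r1 <= hawking_mass k (g i) r2.
Hypothesis g_cvg : forall r, a < r -> is_lim_seq (fun i => g i r) (F r).
Hypothesis F_derivable : ex_derive F r0.

Lemma g_MVT i u v : a < u -> u <= v ->
  exists c, u <= c <= v /\ g i v - g i u = Derive (g i) c * (v - u).
Proof.
  intros a_u uv. apply MVT_interval; [exact uv |].
  intros r r_uv. apply Derive_correct, g_derivable. lra.
Qed.

Lemma increment_cvg u v : a < u -> a < v ->
  is_lim_seq (fun i => g i v - g i u) (F v - F u).
Proof. intros a_u a_v. apply is_lim_seq_minus'; apply g_cvg; assumption. Qed.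

Lemma Derive_limit_ge0 : 0 <= Derive F r0.
Proof.
  apply Rnot_lt_le. intros L_lt0.
  destruct (Derive_increment_bounds F r0 (- Derive F r0) F_derivable ltac:(lra))
    as [d bounds].
  set (t := d / 2).
  assert (t_bd : 0 < t < d) by (unfold t; destruct d; simpl; lra).
  destruct (bounds t t_bd) as [F_decr _].
  destruct (is_lim_seq_eventually_lt _ _ 0 (increment_cvg r0 (r0 + t) a_lt_r0 ltac:(lra))
      ltac:(lra)) as [N g_decr].
  destruct (g_MVT N r0 (r0 + t) a_lt_r0 ltac:(lra)) as [c [c_bd increment]].
  pose proof (g_Derive_ge0 N c ltac:(lra)).
  specialize (g_decr N (le_n N)). nra.
Qed.

Lemma Derive_gt_right x y : 0 <= x < y -> exists d : posreal, forall i r,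
  r0 <= r < r0 + d -> y <= Derive (g i) r0 -> x < Derive (g i) r.
Proof.
  intros xy.
  destruct (locally_pow_mul_lt k r0 (mass_factor x) (mass_factor y) ltac:(lra)
      (mass_factor_lt x y ltac:(lra) ltac:(lra))) as [d near].
  exists d. intros i r r_bd y_le.
  destruct (near r ltac:(rewrite Rabs_right; lra)) as [mass_lt _].
  pose proof (mass_factor_le y _ ltac:(lra) y_le).
  pose proof (g_mass_nondecreasing i r0 r a_lt_r0 ltac:(lra)).
  unfold hawking_mass in *.
  assert (0 < r ^ k) by (apply pow_lt; lra).
  assert (0 < r0 ^ k) by (apply pow_lt; lra).
  apply mass_factor_lt_inv; [apply g_Derive_ge0; lra |].
  apply (Rmult_lt_reg_l (r ^ k)); nra.
Qed.

Lemma Derive_lt_left x y : 0 <= y < x -> exists d : posreal, forall i r,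
  a < r -> r0 - d < r <= r0 -> Derive (g i) r0 <= y -> Derive (g i) r < x.
Proof.
  intros yx.
  destruct (locally_pow_mul_lt k r0 (mass_factor y) (mass_factor x) ltac:(lra)
      (mass_factor_lt y x ltac:(lra) ltac:(lra))) as [d near].
  exists d. intros i r a_r r_bd le_y.
  destruct (near r ltac:(rewrite Rabs_left1; lra)) as [_ mass_lt].
  pose proof (mass_factor_le _ y (g_Derive_ge0 i r0 a_lt_r0) le_y).
  pose proof (g_mass_nondecreasing i r r0 a_r ltac:(lra)).
  unfold hawking_mass in *.
  assert (0 < r ^ k) by (apply pow_lt; lra).
  assert (0 < r0 ^ k) by (apply pow_lt; lra).
  apply mass_factor_lt_inv; [lra |].
  apply (Rmult_lt_reg_l (r ^ k)); nra.
Qed.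

Lemma eventually_Derive_lt e : 0 < e ->
  eventually (fun i => Derive (g i) r0 < Derive F r0 + e).
Proof.
  intros e_gt0. pose proof Derive_limit_ge0.
  destruct (Derive_gt_right (Derive F r0 + e / 2) (Derive F r0 + e) ltac:(lra))
    as [d1 spread].
  destruct (Derive_increment_bounds F r0 (e / 2) F_derivable ltac:(lra)) as [d2 bounds].
  set (t := Rmin d1 d2 / 2).
  assert (t_bd : 0 < t < d1 /\ t < d2).
  { unfold t. destruct d1 as [d1 ?], d2 as [d2 ?]; simpl.
    pose proof (Rmin_l d1 d2). pose proof (Rmin_r d1 d2).
    pose proof (Rmin_glb_lt d1 d2 0 ltac:(lra) ltac:(lra)). lra. }
  destruct (bounds t ltac:(lra)) as [F_incr _].
  destruct (is_lim_seq_eventually_lt _ _ _ (increment_cvg r0 (r0 + t) a_lt_r0 ltac:(lra))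
      F_incr) as [N g_incr].
  exists N. intros i iN. specialize (g_incr i iN).
  apply Rnot_le_lt. intros steep.
  destruct (g_MVT i r0 (r0 + t) a_lt_r0 ltac:(lra)) as [c [c_bd increment]].
  pose proof (spread i c ltac:(lra) steep).
  replace (r0 + t - r0) with t in increment by ring. nra.
Qed.

Lemma eventually_Derive_gt e : 0 < e ->
  eventually (fun i => Derive F r0 - e < Derive (g i) r0).
Proof.
  intros e_gt0.
  destruct (Rlt_le_dec (Derive F r0 - e) 0) as [L_e_lt0 | L_e_ge0].
  { exists 0%nat. intros i _. pose proof (g_Derive_ge0 i r0 a_lt_r0). lra. }
  destruct (Derive_lt_left (Derive F r0 - e / 2) (Derive F r0 - e) ltac:(lra))
    as [d1 spread].
  destruct (Derive_increment_bounds F r0 (e / 2) F_derivable ltac:(lra)) as [d2 bounds].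
  set (t := Rmin (Rmin d1 d2) (r0 - a) / 2).
  assert (t_bd : 0 < t < d1 /\ t < d2 /\ t < r0 - a).
  { unfold t. destruct d1 as [d1 ?], d2 as [d2 ?]; simpl.
    pose proof (Rmin_l d1 d2). pose proof (Rmin_r d1 d2).
    pose proof (Rmin_l (Rmin d1 d2) (r0 - a)). pose proof (Rmin_r (Rmin d1 d2) (r0 - a)).
    pose proof (Rmin_glb_lt d1 d2 0 ltac:(lra) ltac:(lra)).
    pose proof (Rmin_glb_lt (Rmin d1 d2) (r0 - a) 0 ltac:(lra) ltac:(lra)). lra. }
  destruct (bounds t ltac:(lra)) as [_ F_incr].
  destruct (is_lim_seq_eventually_gt _ _ _ (increment_cvg (r0 - t) r0 ltac:(lra) a_lt_r0)
      F_incr) as [N g_incr].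
  exists N. intros i iN. specialize (g_incr i iN).
  apply Rnot_le_lt. intros flat.
  destruct (g_MVT i (r0 - t) r0 ltac:(lra) ltac:(lra)) as [c [c_bd increment]].
  pose proof (spread i c ltac:(lra) ltac:(lra) flat).
  replace (r0 - (r0 - t)) with t in increment by ring.
  nra.
Qed.

Lemma is_lim_seq_Derive : is_lim_seq (fun i => Derive (g i) r0) (Derive F r0).
Proof.
  apply is_lim_seq_spec. intros [e e_gt0].
  destruct (eventually_Derive_lt (e / 2) ltac:(lra)) as [N1 upper].
  destruct (eventually_Derive_gt (e / 2) ltac:(lra)) as [N2 lower].
  exists (max N1 N2). intros i iN. simpl.
  specialize (upper i ltac:(lia)). specialize (lower i ltac:(lia)).
  apply Rabs_def1; lra.
Qed.

End DerivativeLimit.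

Theorem lemma4p3 (n : nat) (hn : (3 <= n)%nat)
  (h : nat -> R -> R) (f : nat -> R -> R) (a0 : R) (flim : R -> R) (r0 : R) :
  0 < a0 ->
  (forall i : nat, RotSym n (h i)) ->
  (forall i : nat, graph_rep (h i) (f i)) ->
  (forall i : nat, h i 0 <= a0) ->
  (forall r : R, a0 <= r -> is_lim_seq (fun i => f i r) (flim r)) ->
  a0 < r0 ->
  ex_derive flim r0 ->
  is_lim_seq (fun i => Derive (f i) r0) (Derive flim r0).
Proof.
  intros a0_gt0 h_RotSym f_graph h0_le f_cvg a0_r0 flim_derivable.
  apply (is_lim_seq_Derive (n - 2) f flim a0 r0); auto.
  - intros i r a0_r. destruct (f_graph i) as (_ & f_smooth & _).
    apply (f_smooth 1%nat). specialize (h0_le i). lra.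
  - intros i r a0_r. destruct (f_graph i) as (_ & _ & _ & f'_ge0).
    apply f'_ge0. specialize (h0_le i). lra.
  - intros i r1 r2 a0_r1 r12.
    apply (graph_rep_mass_nondecreasing n (h i)); auto. specialize (h0_le i). lra.
  - intros r a0_r. apply f_cvg. lra.
Qed.
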